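(* Let $T$ be a Skolem-free theory. If every model $M$ of $T+\mathrm{IND}(L(T))$ has definable Skolem functions, then \[ \mathrm{SA}_{L(T)} + T + \mathrm{IND}(\mathit{sk}^\omega(L(T))) \equiv_{L(T)} T + \mathrm{IND}(L(T)). \]
   Context: Skolem symbols: $\mathfrak{s}_{Qx\varphi}$ ($Q\in\{\forall,\exists\}$) is a new function symbol of arity $|\mathrm{FV}(Qx\varphi)|$ for each formula $Qx\varphi$; $\mathit{sk}^\omega(L)$ is the closure of $L$ under adding these; $L$ (or a theory over $L$) is Skolem-free if $L$ contains none of these symbols. $\mathrm{SA}_L$: universal closures of $\exists x\varphi(x,\vec y)\to\varphi(\mathfrak{s}_{\exists x\varphi}(\vec y),\vec y)$ and $\varphi(\mathfrak{s}_{\forall x\varphi}(\vec y),\vec y)\to\forall x\varphi(x,\vec y)$ for all $\mathit{sk}^\omega(L)$ formulas $\varphi$. $I_x\varphi=\forall\vec z(\varphi(0,\vec z)\wedge\forall x(\varphi(x,\vec z)\to\varphi(s(x),\vec z))\to\forall x\varphi(x,\vec z))$ and $\mathrm{IND}(L')$ is the set of $I_x\varphi$ for all $L'$ formulas $\varphi$. $T_1\equiv_L T_2$ means $T_1$ and $T_2$ prove the same $L$ formulas. For a Skolem-free language $L$ and $L$-structure $M$, a function $f:M^k\to M$ is $L$-definable in $M$ if there is an $L$ formula $\varphi(\vec x,y)$ with $f(\vec d)=b\iff M\models\varphi(\vec d,b)$ for all $\vec d$; $M$ has definable Skolem functions if for every $L$ formula $\varphi(\vec x,y)$ with $\vec x=(x_1,\dots,x_k)$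 there is an $L$-definable $f:M^k\to M$ with $M\models\exists y\varphi(\vec d,y)\to\varphi(\vec d,f(\vec d))$ for all $\vec d\in M^k$. *)

From Stdlib Require Import List Arith PeanoNat.
Import ListNotations.

(* Base function symbols [FBase n k] have name n and arity k.
   [Sk q phi] is the Skolem symbol  s_{Q x phi}  where  Q = exists if
   q = true and Q = forall if q = false, and [phi] is the body of the
   quantified formula (de Bruijn index 0 is the bound variable x).     *)
Inductive term : Type :=
| Var : nat -> term
| App : fsym -> list term -> term
with fsym : Type :=
| FBase : nat -> nat -> fsym
| Sk : bool -> formula -> fsym
with formula : Type :=
| Fal : formula
| Eq : term -> term -> formula
| Pred : psym -> list term -> formula
| Imp : formula -> formula -> formula
| And : formula -> formula -> formula
| Or : formula -> formula -> formula
| All : formula -> formula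
| Ex : formula -> formula
with psym : Type :=
| PBase : nat -> nat -> psym.

Definition Neg (f : formula) : formula := Imp f Fal.

Definition quant (q : bool) (phi : formula) : formula :=
  if q then Ex phi else All phi.

Definition zero_sym : fsym := FBase 0 0.
Definition succ_sym : fsym := FBase 1 1.
Definition tzero : term := App zero_sym [].
Definition tsucc (t : term) : term := App succ_sym [t].

Fixpoint tfree (i : nat) (t : term) : bool :=
  match t with
  | Var n => Nat.eqb n i
  | App _ ts => existsb (tfree i) ts
  end.

Fixpoint ffree (i : nat) (f : formula) : bool :=
  match f with
  | Fal => false
  | Eq t u => tfree i t || tfree i u
  | Pred _ ts => existsb (tfree i) ts
  | Imp a b | And a b | Or a b => ffree i a || ffree i b
  | All a | Ex a => ffree (S i) a
  end.

(* an upper bound (1 + largest free index) for the free variables *)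
Fixpoint tbound (t : term) : nat :=
  match t with
  | Var n => S n
  | App _ ts => fold_right (fun u m => Nat.max (tbound u) m) 0 ts
  end.

Fixpoint fbound (f : formula) : nat :=
  match f with
  | Fal => 0
  | Eq t u => Nat.max (tbound t) (tbound u)
  | Pred _ ts => fold_right (fun u m => Nat.max (tbound u) m) 0 ts
  | Imp a b | And a b | Or a b => Nat.max (fbound a) (fbound b)
  | All a | Ex a => Nat.pred (fbound a)
  end.

Definition fvlist (f : formula) : list nat :=
  filter (fun i => ffree i f) (seq 0 (fbound f)).

Definition sentence (f : formula) : Prop := fbound f = 0.

Fixpoint alln (n : nat) (f : formula) : formula :=
  match n with 0 => f | S n => All (alln n f) end.
Definition uclose (f : formula) : formula := alln (fbound f) f.

Definition farity (g : fsym) : nat :=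
  match g with
  | FBase _ k => k
  | Sk q phi => length (fvlist (quant q phi))
  end.
Definition parity (p : psym) : nat := match p with PBase _ k => k end.

Fixpoint trename (r : nat -> nat) (t : term) : term :=
  match t with
  | Var n => Var (r n)
  | App g ts => App g (map (trename r) ts)
  end.

Definition up (s : nat -> term) : nat -> term :=
  fun n => match n with 0 => Var 0 | S m => trename S (s m) end.

Fixpoint tsubst (s : nat -> term) (t : term) : term :=
  match t with
  | Var n => s n
  | App g ts => App g (map (tsubst s) ts)
  end.

Fixpoint fsubst (s : nat -> term) (f : formula) : formula :=
  match f with
  | Fal => Fal
  | Eq t u => Eq (tsubst s t) (tsubst s u)
  | Pred p ts => Pred p (map (tsubst s) ts)
  | Imp a b => Imp (fsubst s a) (fsubst s b)
  | And a b => And (fsubst s a) (fsubst s b)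
  | Or a b => Or (fsubst s a) (fsubst s b)
  | All a => All (fsubst (up s) a)
  | Ex a => Ex (fsubst (up s) a)
  end.

Definition inst0 (t : term) : nat -> term :=
  fun n => match n with 0 => t | S m => Var m end.

Record language : Type := Lang {
  lfun : fsym -> Prop;
  lpred : psym -> Prop }.

Fixpoint wf_term (L : language) (t : term) : Prop :=
  match t with
  | Var _ => True
  | App g ts => lfun L g /\ length ts = farity g /\
                (fix wfl (us : list term) : Prop :=
                   match us with [] => True | u :: us => wf_term L u /\ wfl us end) ts
  end.

Fixpoint wf_formula (L : language) (f : formula) : Prop :=
  match f with
  | Fal => True
  | Eq t u => wf_term L t /\ wf_term L u
  | Pred p ts => lpred L p /\ length ts = parity p /\ Forall (wf_term L) ts
  | Imp a b | And a b | Or a b => wf_formula L a /\ wf_formula L b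
  | All a | Ex a => wf_formula L a
  end.

Definition skolem_free (L : language) : Prop :=
  forall g, lfun L g -> exists n k, g = FBase n k.

Fixpoint skn (n : nat) (L : language) : language :=
  match n with
  | 0 => L
  | S m => Lang (fun g => lfun (skn m L) g \/
                   exists q phi, g = Sk q phi /\ wf_formula (skn m L) phi)
                (lpred L)
  end.

Definition skw (L : language) : language :=
  Lang (fun g => exists n, lfun (skn n L) g) (lpred L).

Definition skterm (q : bool) (phi : formula) : term :=
  App (Sk q phi) (map Var (fvlist (quant q phi))).

Definition SA_ex (phi : formula) : formula :=
  uclose (Imp (Ex phi) (fsubst (inst0 (skterm true phi)) phi)).
Definition SA_all (phi : formula) : formula :=
  uclose (Imp (fsubst (inst0 (skterm false phi)) phi) (All phi)).

Definition SA (L : language) (f : formula) : Prop :=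
  exists phi, wf_formula (skw L) phi /\ (f = SA_ex phi \/ f = SA_all phi).

(* Induction axiom I_x phi, x = index 0, parameters z = the other indices. *)
Definition Ind (phi : formula) : formula :=
  uclose (Imp (And (fsubst (inst0 tzero) phi)
                   (All (Imp phi (fsubst (fun n => match n with
                                                   | 0 => tsucc (Var 0)
                                                   | S m => Var (S m) end) phi))))
              (All phi)).

Definition IND (L : language) (f : formula) : Prop :=
  exists phi, wf_formula L phi /\ f = Ind phi.

(* Semantics.  A structure interprets every symbol of the universal
   vocabulary; only the symbols of the relevant language matter. *)
Record structure : Type := Struct {
  dom :> Type;
  dom_inh : dom;
  ifun : fsym -> list dom -> dom;
  ipred : psym -> list dom -> Prop }.

Fixpoint teval (M : structure) (rho : nat -> M) (t : term) : M :=
  match t with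
  | Var n => rho n
  | App g ts => ifun M g (map (teval M rho) ts)
  end.

Definition scons {D : Type} (d : D) (rho : nat -> D) : nat -> D :=
  fun n => match n with 0 => d | S m => rho m end.

Fixpoint sat (M : structure) (rho : nat -> M) (f : formula) : Prop :=
  match f with
  | Fal => False
  | Eq t u => teval M rho t = teval M rho u
  | Pred p ts => ipred M p (map (teval M rho) ts)
  | Imp a b => sat M rho a -> sat M rho b
  | And a b => sat M rho a /\ sat M rho b
  | Or a b => sat M rho a \/ sat M rho b
  | All a => forall d : M, sat M (scons d rho) a
  | Ex a => exists d : M, sat M (scons d rho) a
  end.

Definition valid_in (M : structure) (f : formula) : Prop :=
  forall rho, sat M rho f.

Definition model_of (M : structure) (Th : formula -> Prop) : Prop :=
  forall f, Th f -> valid_in M f.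

Definition theory_union (A B : formula -> Prop) : formula -> Prop :=
  fun f => A f \/ B f.

(* consequence: Th proves f (semantic rendering) *)
Definition proves (Th : formula -> Prop) (f : formula) : Prop :=
  forall M : structure, model_of M Th -> valid_in M f.

Definition equiv_on (L : language) (T1 T2 : formula -> Prop) : Prop :=
  forall f, wf_formula L f -> (proves T1 f <-> proves T2 f).

(* environment from a list: index i |-> i-th element (default beyond) *)
Definition env (M : structure) (l : list M) : nat -> M :=
  fun i => nth i l (dom_inh M).

(* f : M^k -> M (represented on lists of length k) is L-definable in M *)
Definition definable (L : language) (M : structure) (k : nat)
    (fn : list M -> M) : Prop :=
  exists psi, wf_formula L psi /\ fbound psi <= S k /\
    forall (d : list M) (b : M), length d = k ->
      (fn d = b <-> sat M (env M (b :: d)) psi).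

(* definable Skolem functions: for phi(x_1..x_k, y) with y = index 0
   and x_i = index i. *)
Definition has_definable_skolem_functions (L : language) (M : structure) : Prop :=
  forall (k : nat) (phi : formula), wf_formula L phi -> fbound phi <= S k ->
    exists fn : list M -> M, definable L M k fn /\
      forall d : list M, length d = k ->
        sat M (env M d) (Ex phi) -> sat M (env M (fn d :: d)) phi.

Definition theory_over (L : language) (T : formula -> Prop) : Prop :=
  forall f, T f -> wf_formula L f /\ sentence f.

(* Let M be a model of T + IND(L).  Expand M to sk^omega(L) level by level along sk^n(L): the
   symbol s_{Q x phi} is interpreted by an L-definable function choosing a witness for phi
   (Q = exists) or a counterexample to phi (Q = forall), which exists because M has definable
   Skolem functions.  As every symbol is then interpreted L-definably, every sk^omega(L)-formula
   is equivalent in the expansion to an L-formula, so induction for sk^omega(L)-formulas reduces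
   to induction in M.  The expansion thus satisfies SA_L + T + IND(sk^omega(L)), and it agrees
   with M on L-formulas.  The other inclusion holds because IND(L) is contained in
   IND(sk^omega(L)). *)

From Stdlib Require Import Bool List PeanoNat Lia.
From Stdlib Require Import FunctionalExtensionality PropExtensionality ClassicalEpsilon.
Import ListNotations.

(** * Syntax and satisfaction *)

Fixpoint term_ind_nested (P : term -> Prop) (Hvar : forall n, P (Var n))
    (Happ : forall g ts, Forall P ts -> P (App g ts)) (t : term) : P t :=
  match t with
  | Var n => Hvar n
  | App g ts =>
      Happ g ts ((fix all_ts (us : list term) : Forall P us :=
                    match us with
                    | [] => Forall_nil P
                    | u :: us => Forall_cons u (term_ind_nested P Hvar Happ u) (all_ts us)
                    end) ts)
  end.

Lemma wf_term_App L g ts :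
  wf_term L (App g ts) <-> lfun L g /\ length ts = farity g /\ Forall (wf_term L) ts.
Proof.
  enough (Hts : forall us, (fix wfl (us : list term) : Prop :=
            match us with [] => True | u :: us => wf_term L u /\ wfl us end) us
          <-> Forall (wf_term L) us) by (simpl; rewrite Hts; reflexivity).
  induction us as [|u us IH]; [split; auto|].
  rewrite Forall_cons_iff, IH; reflexivity.
Qed.

Lemma teval_trename M rho r t :
  teval M rho (trename r t) = teval M (fun i => rho (r i)) t.
Proof.
  induction t as [n|g ts IH] using term_ind_nested; simpl; [reflexivity|].
  f_equal; rewrite map_map; apply map_ext_Forall, IH.
Qed.

Lemma teval_tsubst M rho s t :
  teval M rho (tsubst s t) = teval M (fun i => teval M rho (s i)) t.
Proof.
  induction t as [n|g ts IH] using term_ind_nested; simpl; [reflexivity|].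
  f_equal; rewrite map_map; apply map_ext_Forall, IH.
Qed.

Lemma teval_up M rho s d :
  (fun i => teval M (scons d rho) (up s i)) = scons d (fun i => teval M rho (s i)).
Proof.
  extensionality i; destruct i as [|i]; [reflexivity|].
  simpl; rewrite teval_trename; reflexivity.
Qed.

Lemma sat_fsubst M f : forall s rho,
  sat M rho (fsubst s f) <-> sat M (fun i => teval M rho (s i)) f.
Proof.
  induction f; intros s rho; simpl;
    try (rewrite ?IHf1, ?IHf2, ?teval_tsubst; reflexivity).
  - rewrite map_map; erewrite map_ext; [reflexivity|]; intros; apply teval_tsubst.
  - split; intros H d; specialize (H d); rewrite IHf, teval_up in *; exact H.
  - split; intros [d H]; exists d; rewrite IHf, teval_up in *; exact H.
Qed.

Lemma teval_skterm M rho q phi :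
  teval M rho (skterm q phi) = ifun M (Sk q phi) (map rho (fvlist (quant q phi))).
Proof. unfold skterm; simpl; rewrite map_map; reflexivity. Qed.

Lemma teval_ext M t rho1 rho2 :
  (forall i, tfree i t = true -> rho1 i = rho2 i) -> teval M rho1 t = teval M rho2 t.
Proof.
  induction t as [n|g ts IH] using term_ind_nested; simpl; intros Hrho.
  - apply Hrho, Nat.eqb_refl.
  - f_equal; apply map_ext_in; intros u Hu.
    apply (proj1 (Forall_forall _ _) IH u Hu); intros i Hi.
    apply Hrho, existsb_exists; eauto.
Qed.

Lemma sat_ext M f : forall rho1 rho2,
  (forall i, ffree i f = true -> rho1 i = rho2 i) -> (sat M rho1 f <-> sat M rho2 f).
Proof.
  induction f; intros rho1 rho2 Hrho; simpl in *;
    try (rewrite (IHf1 rho1 rho2), (IHf2 rho1 rho2);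
         [reflexivity | intros i Hi; apply Hrho; rewrite Hi; auto using orb_true_r ..]).
  - reflexivity.
  - rewrite (teval_ext M t rho1 rho2), (teval_ext M t0 rho1 rho2); [reflexivity | ..];
      intros i Hi; apply Hrho; rewrite Hi; auto using orb_true_r.
  - erewrite map_ext_in; [reflexivity|]; intros u Hu.
    apply teval_ext; intros i Hi; apply Hrho, existsb_exists; eauto.
  - assert (Hd : forall d, sat M (scons d rho1) f <-> sat M (scons d rho2) f)
      by (intros d; apply IHf; intros [|i] Hi; simpl; auto).
    setoid_rewrite Hd; reflexivity.
  - assert (Hd : forall d, sat M (scons d rho1) f <-> sat M (scons d rho2) f)
      by (intros d; apply IHf; intros [|i] Hi; simpl; auto).
    setoid_rewrite Hd; reflexivity.
Qed.

Lemma sat_inst0 M rho t phi :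
  sat M rho (fsubst (inst0 t) phi) <-> sat M (scons (teval M rho t) rho) phi.
Proof. rewrite sat_fsubst; apply sat_ext; intros [|i] _; reflexivity. Qed.

Lemma tbound_In u ts :
  In u ts -> tbound u <= fold_right (fun u m => Nat.max (tbound u) m) 0 ts.
Proof. induction ts as [|v ts IH]; simpl; [tauto|]; intros [->|Hu]; [|specialize (IH Hu)]; lia. Qed.

Lemma tfree_lt t i : tfree i t = true -> i < tbound t.
Proof.
  induction t as [n|g ts IH] using term_ind_nested; simpl; intros Hi.
  - apply Nat.eqb_eq in Hi; lia.
  - apply existsb_exists in Hi as (u & Hu & Hi).
    pose proof (tbound_In u ts Hu); pose proof (proj1 (Forall_forall _ _) IH u Hu Hi); lia.
Qed.

Lemma ffree_lt f : forall i, ffree i f = true -> i < fbound f.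
Proof.
  induction f; simpl; intros i Hi; try discriminate;
    try (apply orb_true_iff in Hi as [Hi|Hi];
         [apply IHf1 in Hi || apply tfree_lt in Hi
         | apply IHf2 in Hi || apply tfree_lt in Hi]; lia).
  - apply existsb_exists in Hi as (u & Hu & Hi).
    pose proof (tbound_In u l Hu); pose proof (tfree_lt u i Hi); lia.
  - apply IHf in Hi; lia.
  - apply IHf in Hi; lia.
Qed.

Lemma sat_ext_bound M f rho1 rho2 :
  (forall i, i < fbound f -> rho1 i = rho2 i) -> (sat M rho1 f <-> sat M rho2 f).
Proof. intros Hrho; apply sat_ext; intros i Hi; apply Hrho, ffree_lt, Hi. Qed.

Lemma tbound_trename_S t : tbound (trename S t) <= S (tbound t).
Proof.
  induction t as [n|g ts IH] using term_ind_nested; simpl; [lia|].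
  induction IH; simpl; lia.
Qed.

Lemma tbound_tsubst s m t : (forall j, tbound (s j) <= m) -> tbound (tsubst s t) <= m.
Proof.
  intros Hs; induction t as [n|g ts IH] using term_ind_nested; simpl; [apply Hs|].
  induction IH; simpl; lia.
Qed.

Lemma tbound_up s m :
  (forall j, tbound (s j) <= m) -> forall j, tbound (up s j) <= S m.
Proof.
  intros Hs [|j]; simpl; [lia|].
  pose proof (tbound_trename_S (s j)); specialize (Hs j); lia.
Qed.

Lemma fbound_fsubst f : forall s m,
  (forall j, tbound (s j) <= m) -> fbound (fsubst s f) <= m.
Proof.
  induction f; intros s m Hs; simpl;
    try (pose proof (IHf1 s m Hs); pose proof (IHf2 s m Hs); lia).
  - lia.
  - pose proof (tbound_tsubst s m t Hs); pose proof (tbound_tsubst s m t0 Hs); lia.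
  - induction l as [|t l IHl]; simpl; [lia|]; pose proof (tbound_tsubst s m t Hs); lia.
  - pose proof (IHf (up s) (S m) (tbound_up s m Hs)); lia.
  - pose proof (IHf (up s) (S m) (tbound_up s m Hs)); lia.
Qed.

Lemma wf_term_mono (L1 L2 : language) :
  (forall g, lfun L1 g -> lfun L2 g) -> forall t, wf_term L1 t -> wf_term L2 t.
Proof.
  intros Hfun t; induction t as [n|g ts IH] using term_ind_nested; [simpl; auto|].
  rewrite !wf_term_App; intros (Hg & Hlen & Hts); repeat split; auto.
  rewrite Forall_forall in *; auto.
Qed.

Lemma wf_formula_mono (L1 L2 : language) :
  (forall g, lfun L1 g -> lfun L2 g) -> (forall p, lpred L1 p -> lpred L2 p) ->
  forall f, wf_formula L1 f -> wf_formula L2 f.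
Proof.
  intros Hfun Hpred f; induction f; simpl; try tauto.
  - intros [Ht Hu]; split; apply (wf_term_mono L1); auto.
  - intros (Hp & Hlen & Hts); repeat split; auto.
    revert Hts; apply Forall_impl, wf_term_mono, Hfun.
Qed.

Lemma wf_tsubst L s t :
  (forall j, wf_term L (s j)) -> wf_term L t -> wf_term L (tsubst s t).
Proof.
  intros Hs; induction t as [n|g ts IH] using term_ind_nested; [simpl; auto|].
  change (tsubst s (App g ts)) with (App g (map (tsubst s) ts)).
  rewrite !wf_term_App, length_map, Forall_map; intros (Hg & Hlen & Hts); repeat split; auto.
  rewrite Forall_forall in *; auto.
Qed.

Lemma wf_trename L r t : wf_term L t -> wf_term L (trename r t).
Proof.
  induction t as [n|g ts IH] using term_ind_nested; [simpl; auto|].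
  change (trename r (App g ts)) with (App g (map (trename r) ts)).
  rewrite !wf_term_App, length_map, Forall_map; intros (Hg & Hlen & Hts); repeat split; auto.
  rewrite Forall_forall in *; auto.
Qed.

Lemma wf_fsubst L f : forall s,
  (forall j, wf_term L (s j)) -> wf_formula L f -> wf_formula L (fsubst s f).
Proof.
  induction f; intros s Hs; simpl; try tauto.
  - intros [Ht Hu]; split; apply wf_tsubst; auto.
  - intros (Hp & Hlen & Hts); rewrite length_map, Forall_map; repeat split; auto.
    revert Hts; apply Forall_impl; intros t; apply wf_tsubst, Hs.
  - intros [Ha Hb]; split; auto.
  - intros [Ha Hb]; split; auto.
  - intros [Ha Hb]; split; auto.
  - apply IHf; intros [|j]; simpl; auto using wf_trename.
  - apply IHf; intros [|j]; simpl; auto using wf_trename.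
Qed.

Lemma valid_alln M n f : (forall rho, sat M rho f) -> forall rho, sat M rho (alln n f).
Proof. induction n; simpl; auto. Qed.

Lemma sat_alln_shift M n f : forall rho,
  sat M (fun i => rho (n + i)) (alln n f) -> sat M rho f.
Proof.
  induction n as [|n IH]; intros rho H; simpl in *; [exact H|].
  apply IH; specialize (H (rho n)); revert H; apply sat_ext; intros [|i] _; simpl; f_equal; lia.
Qed.

Lemma valid_uclose M f : valid_in M (uclose f) <-> valid_in M f.
Proof.
  split; intros H rho.
  - apply (sat_alln_shift M (fbound f)), H.
  - apply valid_alln, H.
Qed.

Lemma valid_Ind M phi :
  valid_in M (Ind phi) <->
  forall rho, sat M (scons (ifun M zero_sym []) rho) phi ->
    (forall d, sat M (scons d rho) phi -> sat M (scons (ifun M succ_sym [d]) rho) phi) ->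
    forall d, sat M (scons d rho) phi.
Proof.
  unfold Ind; rewrite valid_uclose.
  assert (Hsucc : forall rho d, sat M (scons d rho) (fsubst (fun n => match n with
                                  | 0 => tsucc (Var 0) | S m => Var (S m) end) phi)
                              <-> sat M (scons (ifun M succ_sym [d]) rho) phi).
  { intros rho d; rewrite sat_fsubst; apply sat_ext; intros [|i] _; reflexivity. }
  unfold valid_in; simpl; setoid_rewrite sat_inst0; setoid_rewrite Hsucc; firstorder.
Qed.

Lemma model_of_union M A B :
  model_of M (theory_union A B) <-> model_of M A /\ model_of M B.
Proof.
  split; [intros H; split; intros f Hf; apply H; [left | right]; exact Hf|].
  intros [HA HB] f [Hf | Hf]; auto.
Qed.

Definition reinterp (M : structure) (F : fsym -> list M -> M) : structure :=
  Struct M (dom_inh M) F (ipred M).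

Lemma sat_reinterp_ifun M rho f : sat (reinterp M (ifun M)) rho f <-> sat M rho f.
Proof. destruct M; reflexivity. Qed.

Lemma teval_reinterp_agree M L F1 F2 :
  (forall g, lfun L g -> F1 g = F2 g) ->
  forall t, wf_term L t -> forall rho, teval (reinterp M F1) rho t = teval (reinterp M F2) rho t.
Proof.
  intros HF t; induction t as [n|g ts IH] using term_ind_nested; [reflexivity|].
  rewrite wf_term_App; intros (Hg & _ & Hts) rho; simpl.
  rewrite HF by exact Hg; f_equal; apply map_ext_in; intros u Hu.
  rewrite Forall_forall in *; auto.
Qed.

Lemma sat_reinterp_agree M L F1 F2 :
  (forall g, lfun L g -> F1 g = F2 g) ->
  forall f, wf_formula L f -> forall rho, sat (reinterp M F1) rho f <-> sat (reinterp M F2) rho f.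
Proof.
  intros HF f; induction f; simpl; intros Hwf rho;
    try (destruct Hwf; rewrite IHf1, IHf2 by assumption; reflexivity).
  - reflexivity.
  - destruct Hwf; rewrite !(teval_reinterp_agree M L F1 F2 HF) by assumption; reflexivity.
  - destruct Hwf as (_ & _ & Hts); erewrite map_ext_in; [reflexivity|]; intros u Hu.
    apply (teval_reinterp_agree M L F1 F2 HF); rewrite Forall_forall in Hts; auto.
  - split; intros H d; apply (IHf Hwf), H.
  - split; intros [d H]; exists d; apply (IHf Hwf), H.
Qed.

Lemma valid_Ind_reinterp M F phi chi :
  F zero_sym = ifun M zero_sym -> F succ_sym = ifun M succ_sym ->
  (forall rho, sat (reinterp M F) rho phi <-> sat M rho chi) ->
  valid_in M (Ind chi) -> valid_in (reinterp M F) (Ind phi).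
Proof.
  intros Hzero Hsucc Hphi; rewrite !valid_Ind; intros Hind rho Hbase Hstep d.
  apply Hphi, Hind; [rewrite <- Hzero; apply Hphi, Hbase|].
  intros e He; rewrite <- Hsucc; apply Hphi, Hstep, Hphi, He.
Qed.

(** * The languages sk^n(L) *)

Lemma lpred_skn L n p : lpred (skn n L) p <-> lpred L p.
Proof. destruct n; reflexivity. Qed.

Lemma lfun_skn_mono L n m g : n <= m -> lfun (skn n L) g -> lfun (skn m L) g.
Proof. induction 1; [auto | intros Hg; left; auto]. Qed.

Lemma wf_term_skn_mono L n m : n <= m -> forall t, wf_term (skn n L) t -> wf_term (skn m L) t.
Proof. intros Hnm; apply wf_term_mono; intros g; apply lfun_skn_mono, Hnm. Qed.

Lemma wf_formula_skn_mono L n m :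
  n <= m -> forall f, wf_formula (skn n L) f -> wf_formula (skn m L) f.
Proof.
  intros Hnm; apply wf_formula_mono; [intros g; apply lfun_skn_mono, Hnm|].
  intros p; rewrite !lpred_skn; auto.
Qed.

Lemma Forall_wf_term_skn L ts :
  Forall (fun t => exists n, wf_term (skn n L) t) ts -> exists n, Forall (wf_term (skn n L)) ts.
Proof.
  induction 1 as [|t ts [a Ht] _ [b Hts]]; [exists 0; constructor|].
  exists (Nat.max a b); constructor.
  - revert Ht; apply wf_term_skn_mono; lia.
  - revert Hts; apply Forall_impl, wf_term_skn_mono; lia.
Qed.

Lemma wf_term_skw L t : wf_term (skw L) t -> exists n, wf_term (skn n L) t.
Proof.
  induction t as [m|g ts IH] using term_ind_nested; [exists 0; exact I|].
  rewrite wf_term_App; intros ([a Hg] & Hlen & Hts).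
  destruct (Forall_wf_term_skn L ts) as [b Hb].
  { rewrite Forall_forall in *; auto. }
  exists (Nat.max a b); apply wf_term_App; repeat split.
  - apply (lfun_skn_mono L a); [lia | exact Hg].
  - exact Hlen.
  - revert Hb; apply Forall_impl, wf_term_skn_mono; lia.
Qed.

Lemma wf_formula_skn_max L f1 f2 :
  (exists a, wf_formula (skn a L) f1) -> (exists b, wf_formula (skn b L) f2) ->
  exists n, wf_formula (skn n L) f1 /\ wf_formula (skn n L) f2.
Proof.
  intros [a Ha] [b Hb]; exists (Nat.max a b); split;
    [revert Ha | revert Hb]; apply wf_formula_skn_mono; lia.
Qed.

Lemma wf_formula_skw L f : wf_formula (skw L) f -> exists n, wf_formula (skn n L) f.
Proof.
  induction f; simpl; intros Hwf.
  - exists 0; exact I.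
  - destruct Hwf as [Ht Hu]; destruct (wf_term_skw L t Ht) as [a Ht'];
      destruct (wf_term_skw L t0 Hu) as [b Hu'].
    exists (Nat.max a b); split; [revert Ht' | revert Hu']; apply wf_term_skn_mono; lia.
  - destruct Hwf as (Hp & Hlen & Hts); destruct (Forall_wf_term_skn L l) as [n Hn].
    { revert Hts; apply Forall_impl, wf_term_skw. }
    exists n; simpl; rewrite lpred_skn; auto.
  - destruct Hwf; apply wf_formula_skn_max; auto.
  - destruct Hwf; apply wf_formula_skn_max; auto.
  - destruct Hwf; apply wf_formula_skn_max; auto.
  - exact (IHf Hwf).
  - exact (IHf Hwf).
Qed.

Lemma wf_formula_skw_base L f : wf_formula L f -> wf_formula (skw L) f.
Proof. apply wf_formula_mono; [intros g Hg; exists 0; exact Hg | auto]. Qed.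

(** * Definable relations *)

Definition definable_rel (L : language) (M : structure) (R : (nat -> M) -> Prop) : Prop :=
  exists psi, wf_formula L psi /\ forall rho, R rho <-> sat M rho psi.

Definition term_graph (M : structure) (F : fsym -> list M -> M) (t : term) (rho : nat -> M)
    : Prop :=
  rho 0 = teval (reinterp M F) (fun i => rho (S i)) t.

Definition symbol_graph_definable L (M : structure) (F : fsym -> list M -> M) (g : fsym) : Prop :=
  definable_rel L M (fun rho => rho (farity g) = F g (map rho (seq 0 (farity g)))).

Lemma map_scons_seq {D : Type} (b : D) (rho : nat -> D) a n :
  map (scons b rho) (seq (S a) n) = map rho (seq a n).
Proof. revert a; induction n; intros a; simpl; f_equal; auto. Qed.

Section DefinableRelations.

Variables (L : language) (M : structure).

Lemma definable_rel_iff (R1 R2 : (nat -> M) -> Prop) :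
  (forall rho, R1 rho <-> R2 rho) -> definable_rel L M R1 -> definable_rel L M R2.
Proof.
  intros HR (psi & Hwf & Hpsi); exists psi; split; [exact Hwf|].
  intros rho; rewrite <- HR; auto.
Qed.

Lemma definable_rel_False : definable_rel L M (fun _ => False).
Proof. exists Fal; split; [exact I | reflexivity]. Qed.

Lemma definable_rel_imp R1 R2 :
  definable_rel L M R1 -> definable_rel L M R2 -> definable_rel L M (fun rho => R1 rho -> R2 rho).
Proof.
  intros (psi1 & Hwf1 & H1) (psi2 & Hwf2 & H2); exists (Imp psi1 psi2); split; [split; auto|].
  intros rho; simpl; rewrite H1, H2; reflexivity.
Qed.

Lemma definable_rel_and R1 R2 :
  definable_rel L M R1 -> definable_rel L M R2 -> definable_rel L M (fun rho => R1 rho /\ R2 rho).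
Proof.
  intros (psi1 & Hwf1 & H1) (psi2 & Hwf2 & H2); exists (And psi1 psi2); split; [split; auto|].
  intros rho; simpl; rewrite H1, H2; reflexivity.
Qed.

Lemma definable_rel_or R1 R2 :
  definable_rel L M R1 -> definable_rel L M R2 -> definable_rel L M (fun rho => R1 rho \/ R2 rho).
Proof.
  intros (psi1 & Hwf1 & H1) (psi2 & Hwf2 & H2); exists (Or psi1 psi2); split; [split; auto|].
  intros rho; simpl; rewrite H1, H2; reflexivity.
Qed.

Lemma definable_rel_all R :
  definable_rel L M R -> definable_rel L M (fun rho => forall d, R (scons d rho)).
Proof.
  intros (psi & Hwf & H); exists (All psi); split; [exact Hwf|].
  intros rho; simpl; split; intros Hd d; apply H, Hd.
Qed.

Lemma definable_rel_ex R :
  definable_rel L M R -> definable_rel L M (fun rho => exists d, R (scons d rho)).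
Proof.
  intros (psi & Hwf & H); exists (Ex psi); split; [exact Hwf|].
  intros rho; simpl; split; intros [d Hd]; exists d; apply H, Hd.
Qed.

Lemma definable_rel_rename R r :
  definable_rel L M R -> definable_rel L M (fun rho => R (fun i => rho (r i))).
Proof.
  intros (psi & Hwf & H); exists (fsubst (fun i => Var (r i)) psi); split.
  - apply wf_fsubst; [intros; exact I | exact Hwf].
  - intros rho; rewrite sat_fsubst; apply H.
Qed.

Lemma definable_rel_var_eq i j : definable_rel L M (fun rho => rho i = rho j).
Proof. exists (Eq (Var i) (Var j)); split; [split; exact I | reflexivity]. Qed.

Lemma wf_vars k : Forall (wf_term L) (map Var (seq 0 k)).
Proof. rewrite Forall_map; apply Forall_forall; intros; exact I. Qed.

Lemma symbol_graph_definable_base g : lfun L g -> symbol_graph_definable L M (ifun M) g.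
Proof.
  intros Hg; exists (Eq (Var (farity g)) (App g (map Var (seq 0 (farity g))))); split.
  - split; [exact I|]; apply wf_term_App; rewrite length_map, length_seq; auto using wf_vars.
  - intros rho; simpl; rewrite map_map; reflexivity.
Qed.

Lemma definable_rel_pred p :
  lpred L p -> definable_rel L M (fun rho => ipred M p (map rho (seq 0 (parity p)))).
Proof.
  intros Hp; exists (Pred p (map Var (seq 0 (parity p)))); split.
  - cbn [wf_formula]; rewrite length_map, length_seq; auto using wf_vars.
  - intros rho; simpl; rewrite map_map; reflexivity.
Qed.

Variable F : fsym -> list M -> M.

(* The values of the terms [ts] are bound one at a time by existential quantifiers over their
   graphs. *)
Lemma definable_rel_term_values (r : nat -> nat) ts :
  Forall (fun t => definable_rel L M (term_graph M F t)) ts ->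
  forall Q : list M -> (nat -> M) -> Prop,
  definable_rel L M (fun rho => Q (map rho (seq 0 (length ts))) (fun i => rho (length ts + i))) ->
  definable_rel L M (fun rho => Q (map (teval (reinterp M F) (fun i => rho (r i))) ts) rho).
Proof.
  induction 1 as [|t ts Ht Hts IH]; intros Q HQ; [exact HQ|].
  apply (IH (fun vs rho => Q (teval (reinterp M F) (fun i => rho (r i)) t :: vs) rho)).
  pose proof (definable_rel_rename _ (fun j => match j with 0 => 0 | S i => S (length ts + r i) end)
                Ht) as Ht'.
  eapply definable_rel_iff; [|exact (definable_rel_ex _ (definable_rel_and _ _ Ht' HQ))].
  intros rho; unfold term_graph; simpl; split.
  - intros (b & -> & H); rewrite map_scons_seq in H; exact H.
  - intros H; eexists; split; [reflexivity|]; rewrite map_scons_seq; exact H.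
Qed.

Variable L0 : language.
Hypothesis lpred_L0 : forall p, lpred L0 p -> lpred L p.
Hypothesis graphs_L0 : forall g, lfun L0 g -> symbol_graph_definable L M F g.

Lemma term_graph_definable t : wf_term L0 t -> definable_rel L M (term_graph M F t).
Proof.
  induction t as [n|g ts IH] using term_ind_nested; [intros _; apply definable_rel_var_eq|].
  rewrite wf_term_App; intros (Hg & Hlen & Hts).
  apply (definable_rel_term_values S ts) with (Q := fun vs rho => rho 0 = F g vs).
  - rewrite Forall_forall in *; auto.
  - eapply definable_rel_iff; [|exact (graphs_L0 g Hg)].
    intros rho; rewrite Hlen, Nat.add_0_r; reflexivity.
Qed.

Lemma sat_reinterp_definable f :
  wf_formula L0 f -> definable_rel L M (fun rho => sat (reinterp M F) rho f).
Proof.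
  induction f; simpl; intros Hwf.
  - apply definable_rel_False.
  - destruct Hwf as [Ht Hu].
    eapply definable_rel_iff;
      [|exact (definable_rel_ex _ (definable_rel_and _ _ (term_graph_definable t Ht)
                                                         (term_graph_definable t0 Hu)))].
    intros rho; unfold term_graph; simpl; split.
    + intros (b & Ht_b & Hu_b); exact (eq_trans (eq_sym Ht_b) Hu_b).
    + intros H; eexists; split; [reflexivity | exact H].
  - destruct Hwf as (Hp & Hlen & Hts).
    apply (definable_rel_term_values id l) with (Q := fun vs _ => ipred M p vs).
    + revert Hts; apply Forall_impl, term_graph_definable.
    + rewrite Hlen; apply definable_rel_pred, lpred_L0, Hp.
  - destruct Hwf; apply definable_rel_imp; auto.
  - destruct Hwf; apply definable_rel_and; auto.
  - destruct Hwf; apply definable_rel_or; auto.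
  - exact (definable_rel_all _ (IHf Hwf)).
  - exact (definable_rel_ex _ (IHf Hwf)).
Qed.

End DefinableRelations.

Lemma definable_graph L M k fn :
  definable L M k fn -> definable_rel L M (fun rho => rho k = fn (map rho (seq 0 k))).
Proof.
  intros (psi & Hwf & Hbound & Hpsi).
  eapply definable_rel_iff;
    [|exact (definable_rel_rename L M _ (fun j => match j with 0 => k | S i => i end)
              (ex_intro _ psi (conj Hwf (fun rho => iff_refl _))))].
  intros rho; transitivity (fn (map rho (seq 0 k)) = rho k); [|split; intros H; symmetry; exact H].
  rewrite Hpsi by (rewrite length_map, length_seq; reflexivity).
  apply sat_ext_bound; intros [|i] Hi; [reflexivity|]; unfold env; simpl.
  rewrite nth_indep with (d' := rho 0) by (rewrite length_map, length_seq; lia).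
  rewrite map_nth, seq_nth by lia; reflexivity.
Qed.

(** * Definable Skolem functions *)

Fixpoint index_of (i : nat) (l : list nat) : nat :=
  match l with
  | [] => 0
  | x :: l => if Nat.eqb x i then 0 else S (index_of i l)
  end.

Lemma index_of_lt i l : In i l -> index_of i l < length l.
Proof.
  induction l as [|x l IH]; simpl; [tauto|]; intros Hi.
  destruct (Nat.eqb_spec x i); [lia|].
  destruct Hi as [->|Hi]; [contradiction | specialize (IH Hi); lia].
Qed.

Lemma nth_index_of_map {D : Type} (rho : nat -> D) z i l :
  In i l -> nth (index_of i l) (map rho l) z = rho i.
Proof.
  induction l as [|x l IH]; simpl; [tauto|]; intros Hi.
  destruct (Nat.eqb_spec x i) as [->|Hx]; [reflexivity|].
  destruct Hi as [->|Hi]; [contradiction | auto].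
Qed.

Lemma In_fvlist_quant q phi i : ffree (S i) phi = true -> In i (fvlist (quant q phi)).
Proof.
  intros Hi; assert (Hq : ffree i (quant q phi) = true) by (destruct q; exact Hi).
  apply filter_In; split; [apply in_seq; pose proof (ffree_lt _ _ Hq); lia | exact Hq].
Qed.

(* As in [skterm], the arguments [d] of a Skolem function are the values of the free variables of
   [Q x phi], listed in the order of [fvlist]. *)
Definition skolem_rel (M : structure) (F : fsym -> list M -> M) (q : bool) (phi : formula)
    (d : list M) (b : M) : Prop :=
  sat (reinterp M F) (scons b (fun i => env M d (index_of i (fvlist (quant q phi))))) phi.

Lemma skolem_rel_map M F q phi rho v :
  sat (reinterp M F) (scons v rho) phi <-> skolem_rel M F q phi (map rho (fvlist (quant q phi))) v.
Proof.
  apply sat_ext; intros [|i] Hi; [reflexivity|].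
  symmetry; apply (nth_index_of_map rho), In_fvlist_quant, Hi.
Qed.

(* Variables not free in [Q x phi] are sent to [Var 0] only to keep every variable below [S k], as
   [has_definable_skolem_functions] demands. *)
Definition pack_fv (fvl : list nat) (j : nat) : term :=
  match j with
  | 0 => Var 0
  | S i => if index_of i fvl <? length fvl then Var (S (index_of i fvl)) else Var 0
  end.

Lemma skolem_rel_definable L M F q phi :
  definable_rel L M (fun rho => sat (reinterp M F) rho phi) ->
  exists psi, wf_formula L psi /\ fbound psi <= S (farity (Sk q phi)) /\
    forall d b, length d = farity (Sk q phi) ->
      (sat M (env M (b :: d)) psi <-> skolem_rel M F q phi d b).
Proof.
  intros (chi & Hwf & Hchi); set (fvl := fvlist (quant q phi)).
  change (farity (Sk q phi)) with (length fvl).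
  exists (fsubst (pack_fv fvl) chi); split; [|split].
  - apply wf_fsubst; [intros [|i]; unfold pack_fv; [|destruct (_ <? _)]; exact I | exact Hwf].
  - apply fbound_fsubst; intros [|i]; simpl; [lia|].
    destruct (Nat.ltb_spec (index_of i fvl) (length fvl)); simpl; lia.
  - intros d b Hlen; rewrite sat_fsubst, <- Hchi; apply sat_ext; intros [|i] Hi; [reflexivity|].
    pose proof (index_of_lt _ _ (In_fvlist_quant q phi i Hi)) as Hlt; fold fvl in Hlt.
    simpl; rewrite (proj2 (Nat.ltb_lt _ _) Hlt); reflexivity.
Qed.

Definition skolem_choice (L : language) (M : structure) (q : bool) (k : nat)
    (R : list M -> M -> Prop) (fn : list M -> M) : Prop :=
  definable L M k fn /\
  forall d, length d = k ->
    if q then (exists b, R d b) -> R d (fn d) else (exists b, ~ R d b) -> ~ R d (fn d).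

Definition choose_skolem (L : language) (M : structure) (q : bool) (k : nat)
    (R : list M -> M -> Prop) : list M -> M :=
  epsilon (inhabits (fun _ => dom_inh M)) (skolem_choice L M q k R).

Lemma skolem_choice_exists L M F q phi :
  has_definable_skolem_functions L M ->
  definable_rel L M (fun rho => sat (reinterp M F) rho phi) ->
  exists fn, skolem_choice L M q (farity (Sk q phi)) (skolem_rel M F q phi) fn.
Proof.
  intros HD Hdef; destruct (skolem_rel_definable L M F q phi Hdef) as (psi & Hwf & Hbound & Hpsi).
  assert (Henv : forall (d : list M) b, scons b (env M d) = env M (b :: d))
    by (intros d b; extensionality j; destruct j; reflexivity).
  destruct q.
  - destruct (HD _ psi Hwf Hbound) as (fn & Hfn & Hspec); exists fn; split; [exact Hfn|].
    intros d Hlen [b Hb]; apply Hpsi; [exact Hlen|]; apply Hspec; [exact Hlen|].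
    exists b; rewrite Henv; apply Hpsi; assumption.
  - (* a counterexample to [phi] is a witness for [Neg psi] *)
    assert (Hbound_neg : fbound (Neg psi) <= S (farity (Sk false phi)))
      by (apply Nat.max_lub; [exact Hbound | apply Nat.le_0_l]).
    destruct (HD _ (Neg psi) (conj Hwf I) Hbound_neg) as (fn & Hfn & Hspec).
    exists fn; split; [exact Hfn|].
    intros d Hlen [b Hb] Hfnd; apply (Hspec d Hlen); [|apply Hpsi; assumption].
    exists b; rewrite Henv; intros Hsat; apply Hb, Hpsi; assumption.
Qed.

Lemma choose_skolem_spec L M F q phi :
  has_definable_skolem_functions L M ->
  definable_rel L M (fun rho => sat (reinterp M F) rho phi) ->
  skolem_choice L M q (farity (Sk q phi)) (skolem_rel M F q phi)
    (choose_skolem L M q (farity (Sk q phi)) (skolem_rel M F q phi)).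
Proof.
  intros HD Hdef; unfold choose_skolem; apply epsilon_spec, skolem_choice_exists; assumption.
Qed.

(** * The Skolem expansion *)

Fixpoint level_interp (L : language) (M : structure) (n : nat) (g : fsym) : list M -> M :=
  match n, g with
  | S n, Sk q phi =>
      choose_skolem L M q (farity (Sk q phi)) (skolem_rel M (level_interp L M n) q phi)
  | _, _ => ifun M g
  end.

Section SkolemExpansion.

Variables (L : language) (M : structure).
Hypothesis L_skolem_free : skolem_free L.

Lemma level_interp_stable n g :
  lfun (skn n L) g -> forall m, n <= m -> level_interp L M m g = level_interp L M n g.
Proof.
  revert g; induction n as [|n IH]; intros g Hg m Hnm.
  - destruct (L_skolem_free g Hg) as (a & k & ->); destruct m; reflexivity.
  - destruct Hg as [Hg | (q & phi & -> & Hwf)].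
    + rewrite (IH g Hg m), (IH g Hg (S n)) by lia; reflexivity.
    + destruct m as [|m]; [lia|]; simpl; f_equal.
      extensionality d; extensionality b; apply propositional_extensionality.
      apply (sat_reinterp_agree M (skn n L)); [|exact Hwf].
      intros h Hh; apply IH; [exact Hh | lia].
Qed.

Definition skolem_interp (g : fsym) : list M -> M :=
  level_interp L M (epsilon (inhabits 0) (fun n => lfun (skn n L) g)) g.

Lemma skolem_interp_level n g : lfun (skn n L) g -> skolem_interp g = level_interp L M n g.
Proof.
  intros Hg; unfold skolem_interp.
  set (n0 := epsilon _ _); assert (Hn0 : lfun (skn n0 L) g) by (apply epsilon_spec; eauto).
  rewrite <- (level_interp_stable n0 g Hn0 (Nat.max n n0)) by lia.
  apply level_interp_stable; [exact Hg | lia].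
Qed.

Definition skolem_expansion : structure := reinterp M skolem_interp.

Lemma sat_skolem_expansion_level n f :
  wf_formula (skn n L) f ->
  forall rho, sat skolem_expansion rho f <-> sat (reinterp M (level_interp L M n)) rho f.
Proof. apply sat_reinterp_agree; intros g; apply skolem_interp_level. Qed.

Lemma sat_skolem_expansion_base f :
  wf_formula L f -> forall rho, sat skolem_expansion rho f <-> sat M rho f.
Proof.
  intros Hwf rho; rewrite (sat_skolem_expansion_level 0 f Hwf).
  apply sat_reinterp_ifun.
Qed.

Lemma skolem_interp_FBase a k : skolem_interp (FBase a k) = ifun M (FBase a k).
Proof. unfold skolem_interp; destruct (epsilon _ _); reflexivity. Qed.

Hypothesis M_definable_skolem : has_definable_skolem_functions L M.

Lemma level_graph_definable n g :
  lfun (skn n L) g -> symbol_graph_definable L M (level_interp L M n) g.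
Proof.
  revert g; induction n as [|n IH]; intros g Hg.
  - apply symbol_graph_definable_base, Hg.
  - destruct Hg as [Hg | (q & phi & -> & Hwf)].
    + unfold symbol_graph_definable; rewrite (level_interp_stable n g Hg (S n)) by lia.
      apply IH, Hg.
    + apply definable_graph, choose_skolem_spec; [exact M_definable_skolem|].
      apply (sat_reinterp_definable L M _ (skn n L));
        [intros p; apply lpred_skn | exact IH | exact Hwf].
Qed.

Lemma level_sat_definable n f :
  wf_formula (skn n L) f ->
  definable_rel L M (fun rho => sat (reinterp M (level_interp L M n)) rho f).
Proof.
  apply sat_reinterp_definable; [intros p; apply lpred_skn | apply level_graph_definable].
Qed.

Lemma skolem_expansion_definable f :
  wf_formula (skw L) f -> definable_rel L M (fun rho => sat skolem_expansion rho f).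
Proof.
  intros Hwf; destruct (wf_formula_skw L f Hwf) as [n Hn].
  eapply definable_rel_iff; [intros rho; symmetry; apply (sat_skolem_expansion_level n f Hn)|].
  apply level_sat_definable, Hn.
Qed.

Lemma skolem_expansion_Sk n q phi :
  wf_formula (skn n L) phi ->
  ifun skolem_expansion (Sk q phi) =
    choose_skolem L M q (farity (Sk q phi)) (skolem_rel M (level_interp L M n) q phi).
Proof. intros Hwf; apply (skolem_interp_level (S n)); right; eauto. Qed.

Lemma skolem_expansion_SA : model_of skolem_expansion (SA L).
Proof.
  intros f (phi & Hwf & Hf); destruct (wf_formula_skw L phi Hwf) as [n Hn].
  set (R q := skolem_rel M (level_interp L M n) q phi).
  assert (HR : forall q rho v, sat skolem_expansion (scons v rho) phi <->
                                 R q (map rho (fvlist (quant q phi))) v).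
  { intros q rho v; rewrite (sat_skolem_expansion_level n phi Hn); apply skolem_rel_map. }
  assert (Hchoice : forall q, skolem_choice L M q (farity (Sk q phi)) (R q)
                                            (ifun skolem_expansion (Sk q phi))).
  { intros q; rewrite (skolem_expansion_Sk n q phi Hn).
    apply choose_skolem_spec; [exact M_definable_skolem | apply level_sat_definable, Hn]. }
  destruct Hf as [-> | ->]; apply valid_uclose; intros rho; simpl; rewrite sat_inst0, teval_skterm.
  - intros [d Hd]; apply (HR true); destruct (Hchoice true) as [_ Hspec].
    apply (Hspec _ (length_map _ _)); exists d; apply (HR true), Hd.
  - intros H d; apply NNPP; intros Hd; destruct (Hchoice false) as [_ Hspec].
    apply (Hspec (map rho (fvlist (quant false phi))) (length_map _ _)).
    + exists d; rewrite <- (HR false rho d); exact Hd.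
    + apply (HR false), H.
Qed.

Lemma skolem_expansion_IND : model_of M (IND L) -> model_of skolem_expansion (IND (skw L)).
Proof.
  intros HM f (phi & Hwf & ->).
  destruct (skolem_expansion_definable phi Hwf) as (chi & Hchi_wf & Hchi).
  apply (valid_Ind_reinterp M skolem_interp phi chi);
    [apply skolem_interp_FBase | apply skolem_interp_FBase | exact Hchi |].
  apply HM; exists chi; auto.
Qed.

Lemma skolem_expansion_theory T :
  theory_over L T -> model_of M T -> model_of skolem_expansion T.
Proof. intros HT HM f Hf rho; apply sat_skolem_expansion_base; [apply HT, Hf | apply HM, Hf]. Qed.

Lemma skolem_expansion_model T :
  theory_over L T -> model_of M (theory_union T (IND L)) ->
  model_of skolem_expansion (theory_union (SA L) (theory_union T (IND (skw L)))).
Proof.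
  intros HT HM; apply model_of_union in HM as [HM_T HM_IND].
  apply model_of_union; split; [apply skolem_expansion_SA | apply model_of_union; split].
  - apply skolem_expansion_theory; assumption.
  - apply skolem_expansion_IND; assumption.
Qed.

End SkolemExpansion.

Lemma IND_skw_base L f : IND L f -> IND (skw L) f.
Proof.
  intros (phi & Hwf & ->); exists phi; split; [apply wf_formula_skw_base, Hwf | reflexivity].
Qed.

Theorem proposition8 (L : language) (T : formula -> Prop) :
  skolem_free L ->
  lfun L zero_sym -> lfun L succ_sym ->
  theory_over L T ->
  (forall M : structure,
      model_of M (theory_union T (IND L)) ->
      has_definable_skolem_functions L M) ->
  equiv_on L
    (theory_union (SA L) (theory_union T (IND (skw L))))
    (theory_union T (IND L)).
Proof.
  (* The expansion keeps every base symbol, so [0] and [s] need not belong to [L]. *)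
  intros L_skolem_free _ _ HT Hdef f Hf; split; intros Hprov M HM.
  - intros rho; apply (sat_skolem_expansion_base L M L_skolem_free f Hf), Hprov.
    apply skolem_expansion_model; auto.
  - apply Hprov; rewrite !model_of_union in *; destruct HM as (_ & HM_T & HM_IND).
    split; [exact HM_T|]; intros g Hg; apply HM_IND, IND_skw_base, Hg.
Qed.
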